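(* Let $\mathcal M$ be a Polish metric structure and $\mathcal N$ a good countable approximating substructure of $\mathcal M$. Then for every $n$ and every co-meagre $A\subseteq\mathrm{Aut}(\mathcal N)^n$, the $\partial$-closure $\overline{A}^\partial$ computed in $\mathrm{Aut}(\mathcal M)^n$ is co-meagre in $\mathrm{Aut}(\mathcal M)^n$. In particular, if $\mathrm{Aut}(\mathcal N)$ has ample generics then the topometric group $(\mathrm{Aut}(\mathcal M),\tau,\partial)$ has ample generics.
   Context: A metric structure $\mathcal M$ is a complete bounded metric space $(M,d)$ with a family of uniformly continuous bounded predicates $P_i\colon M^{k_i}\to\mathbb R$ (including $d$) and uniformly continuous functions $f_j\colon M^{\ell_j}\to M$; it is Polish if $M$ is separable. $\mathrm{Aut}(\mathcal M)$ is the group of bijections preserving all predicates and functions, with $\tau$ the topology of pointwise convergence and $\partial(g,h)=\sup_{x\in M}d(gx,hx)$ the metric of uniform convergence; on $\mathrm{Aut}(\mathcal M)^n$ use the product topology and supremum metric. For $B$ in a metric space, $(B)_\varepsilon=\{y\colon\partial(y,B)<\varepsilon\}$. A countable (classical) structure $\mathcal N$ is a countable approximating substructure of $\mathcal M$ if its universe $N$ is a countable dense subset of $(M,d)$, every automorphism of $\mathcal N$ extends (uniquely) to an automorphism of $\mathcal M$, and $\mathrm{Aut}(\mathcal N)$ is dense in $\mathrm{Aut}(\mathcal M)$; $\mathrm{Aut}(\mathcal N)$ carries the topology of pointwise convergence on the discrete set $N$. It is good if moreover for every open $U\subseteq\mathrm{Aut}(\mathcal N)$ (in the topology of $\mathrm{Aut}(\mathcal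 N)$) and $\varepsilon>0$, the set $(U)_\varepsilon$ computed in $(\mathrm{Aut}(\mathcal M),\partial)$ is $\tau$-open. A Polish group $K$ has ample generics if for every $n$ there is $\bar g\in K^n$ whose diagonal conjugacy class $\{(kg_0k^{-1},\dots,kg_{n-1}k^{-1})\colon k\in K\}$ is co-meagre in $K^n$. A topometric group $(G,\tau,\partial)$ has ample generics if for every $n$ and $\varepsilon>0$ there is $\bar g\in G^n$ whose diagonal conjugacy class $C$ satisfies that $(C)_\varepsilon$ is co-meagre in $(G^n,\tau)$. *)

From Stdlib Require List.
From mathcomp Require Import all_boot all_order all_algebra.
From mathcomp Require Import boolp classical_sets cardinality reals.
Set Implicit Arguments. Unset Strict Implicit. Unset Printing Implicit Defensive.
Import Order.TTheory GRing.Theory Num.Theory.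
Local Open Scope ring_scope.
Local Open Scope classical_set_scope.

Record mstruct (R : realType) := MStruct {
  mcar : Type;
  mdist : mcar -> mcar -> R;
  pidx : Type;
  par : pidx -> nat;
  mpred : forall i : pidx, (par i).-tuple mcar -> R;
  fidx : Type;
  far : fidx -> nat;
  mfun : forall j : fidx, (far j).-tuple mcar -> mcar }.

Section MetricStructure.
Variables (R : realType) (M : mstruct R).
Local Notation d := (@mdist R M).

Definition is_metric :=
  (forall x y, 0 <= d x y) /\ (forall x y, d x y = 0 <-> x = y) /\
  (forall x y, d x y = d y x) /\ (forall x y z, d x z <= d x y + d y z).

Definition complete_metric := forall u : nat -> mcar M,
  (forall e, 0 < e -> exists N, forall m n, (N <= m)%N -> (N <= n)%N -> d (u m) (u n) < e) ->
  exists l, forall e, 0 < e -> exists N, forall n, (N <= n)%N -> d (u n) l < e.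

Definition bounded_metric := exists B : R, forall x y, d x y <= B.

Definition unif_cont_pred k (P : k.-tuple (mcar M) -> R) :=
  forall e, 0 < e -> exists2 delta, 0 < delta & forall xs ys : k.-tuple (mcar M),
    (forall i, d (tnth xs i) (tnth ys i) < delta) -> `|P xs - P ys| < e.
Definition bounded_pred k (P : k.-tuple (mcar M) -> R) :=
  exists B : R, forall xs, `|P xs| <= B.
Definition unif_cont_fun k (f : k.-tuple (mcar M) -> mcar M) :=
  forall e, 0 < e -> exists2 delta, 0 < delta & forall xs ys : k.-tuple (mcar M),
    (forall i, d (tnth xs i) (tnth ys i) < delta) -> d (f xs) (f ys) < e.

Definition is_metric_structure :=
  [/\ is_metric, complete_metric, bounded_metric,
      (forall i, unif_cont_pred (@mpred R M i) /\ bounded_pred (@mpred R M i)) &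
      (forall j, unif_cont_fun (@mfun R M j))].

Definition separable := exists D : set (mcar M), countable D /\
  forall x e, 0 < e -> exists2 y, D y & d x y < e.

Definition polish_metric_structure := is_metric_structure /\ separable.

Definition autM (g : mcar M -> mcar M) :=
  [/\ bijective g, (forall x y, d (g x) (g y) = d x y),
      (forall i (xs : (par i).-tuple (mcar M)), mpred (map_tuple g xs) = mpred xs) &
      (forall j (xs : (far j).-tuple (mcar M)), g (mfun xs) = mfun (map_tuple g xs))].

Definition udist (g h : mcar M -> mcar M) : R := sup (range (fun x => d (g x) (h x))).

Definition AutMn (n : nat) : set ('I_n -> mcar M -> mcar M) :=
  [set gs | forall i, autM (gs i)].

(* tau-open subsets of Aut(M)^n (product of pointwise convergence topologies,
   relative to Aut(M)^n) *)
Definition tau_open (n : nat) (U : set ('I_n -> mcar M -> mcar M)) :=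
  U `<=` @AutMn n /\
  forall gs, U gs -> exists (F : seq (mcar M)) (e : R), 0 < e /\
    forall hs, @AutMn n hs ->
      (forall i x, Stdlib.Lists.List.In x F -> d (gs i x) (hs i x) < e) -> U hs.

Definition udistn_lt (n : nat) (gs hs : 'I_n -> mcar M -> mcar M) (e : R) :=
  forall i, udist (gs i) (hs i) < e.

Definition eps_nbhd (n : nat) (B : set ('I_n -> mcar M -> mcar M)) (e : R) :=
  [set gs | @AutMn n gs /\ exists2 hs, B hs & udistn_lt gs hs e].

Definition dclosure (n : nat) (B : set ('I_n -> mcar M -> mcar M)) :=
  [set gs | @AutMn n gs /\ forall e, 0 < e -> exists2 hs, B hs & udistn_lt gs hs e].

End MetricStructure.

Section Category.
Variables (T : Type) (X : set T) (op : set T -> Prop).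

Definition nowhere_dense (A : set T) :=
  forall U, op U -> U !=set0 ->
    exists V, [/\ op V, V !=set0, V `<=` U & V `&` A = set0].

Definition meagre (A : set T) :=
  exists An : nat -> set T, (forall k, nowhere_dense (An k)) /\ A `<=` \bigcup_k An k.

Definition comeagre (A : set T) := meagre (X `\` A).
End Category.

Record cstruct := CStruct {
  ncar : Type;
  ridx : Type;
  rar : ridx -> nat;
  nrel : forall j : ridx, (rar j).-tuple ncar -> Prop;
  gidx : Type;
  gar : gidx -> nat;
  nfun : forall j : gidx, (gar j).-tuple ncar -> ncar }.

Section Classical.
Variable N : cstruct.

Definition autN (s : ncar N -> ncar N) :=
  [/\ bijective s,
      (forall j (xs : (rar j).-tuple (ncar N)), nrel (map_tuple s xs) <-> nrel xs) &
      (forall j (xs : (gar j).-tuple (ncar N)), s (nfun xs) = nfun (map_tuple s xs))].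

Definition AutNn (n : nat) : set ('I_n -> ncar N -> ncar N) :=
  [set ss | forall i, autN (ss i)].

(* open subsets of Aut(N)^n: pointwise convergence on the discrete set N *)
Definition N_open (n : nat) (U : set ('I_n -> ncar N -> ncar N)) :=
  U `<=` @AutNn n /\
  forall ss, U ss -> exists F : seq (ncar N),
    forall ts, @AutNn n ts -> (forall i x, Stdlib.Lists.List.In x F -> ts i x = ss i x) -> U ts.
End Classical.

Section Approx.
Variables (R : realType) (M : mstruct R) (N : cstruct) (iota : ncar N -> mcar M).

(* g : M -> M extends s : N -> N (N identified with its image under iota) *)
Definition extends (g : mcar M -> mcar M) (s : ncar N -> ncar N) :=
  forall x, g (iota x) = iota (s x).

Definition extn (n : nat) (A : set ('I_n -> ncar N -> ncar N)) :=
  [set gs | @AutMn R M n gs /\ exists2 ss, A ss & forall i, extends (gs i) (ss i)].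

(* N is a countable approximating substructure of M (universe of N is the
   countable dense subset iota(N) of M) *)
Definition approximating :=
  [/\ injective iota, countable [set: ncar N],
      (forall x e, 0 < e -> exists y, mdist x (iota y) < e),
      (forall s, autN s -> exists g, autM g /\ extends g s) &
      (* Aut(N) is dense in Aut(M) (for tau) *)
      (forall U, tau_open U -> U !=set0 -> (U `&` @extn 1 (@AutNn N 1)) !=set0)].

Definition good_approximating :=
  approximating /\
  forall (U : set ('I_1 -> ncar N -> ncar N)) (e : R),
    N_open U -> 0 < e -> tau_open (eps_nbhd (@extn 1 U) e).
End Approx.

Definition conjclassN (N : cstruct) (n : nat) (ss : 'I_n -> ncar N -> ncar N) :=
  [set ts | @AutNn N n ts /\ exists2 k, autN k & forall i, ts i \o k = k \o ss i].

Definition ample_generics_N (N : cstruct) :=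
  forall n, exists2 ss, @AutNn N n ss &
    comeagre (@AutNn N n) (@N_open N n) (conjclassN ss).

Definition conjclassM (R : realType) (M : mstruct R) (n : nat)
    (gs : 'I_n -> mcar M -> mcar M) :=
  [set hs | @AutMn R M n hs /\ exists2 k, autM k & forall i, hs i \o k = k \o gs i].

Definition ample_generics_topometric (R : realType) (M : mstruct R) :=
  forall n (e : R), 0 < e -> exists2 gs, @AutMn R M n gs &
    comeagre (@AutMn R M n) (@tau_open R M n) (eps_nbhd (conjclassM gs) e).

(* A residual subset of Aut(N)^n contains an intersection of dense open sets W_k.  A tuple
   g of Aut(M)^n that avoids countably many nowhere dense sets -- where g is not close to
   extensions of Aut(N)^n, or where g is close to extensions of a basic open set B but not
   to extensions of B meeting some W_k -- is approached, within any e, by the extension of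
   the limit of a back-and-forth sequence of finite partial automorphisms of N forcing every
   W_k.  Goodness of N is what makes those sets nowhere dense.  Ample generics transfer
   because extensions of conjugate tuples are conjugate, conjugacy being decided on the
   dense copy of N. *)
From mathcomp Require Import all_boot all_order all_algebra.
From mathcomp Require Import boolp classical_sets cardinality reals.
From mathcomp Require Import lra.
Set Implicit Arguments. Unset Strict Implicit. Unset Printing Implicit Defensive.
Import Order.TTheory GRing.Theory Num.Theory.
Local Open Scope ring_scope.
Local Open Scope classical_set_scope.

Lemma In_enum (T : finType) (x : T) : List.In x (enum T).
Proof.
have : x \in enum T by rewrite mem_enum.
elim: (enum T) => //= a s IH; rewrite inE => /orP[/eqP->|/IH]; by [left|right].
Qed.

Lemma map_ext_In (A B : Type) (f g : A -> B) (s : seq A) :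
  (forall x, List.In x s -> f x = g x) -> map f s = map g s.
Proof.
elim: s => //= a s IH H; rewrite H ?IH // => [x Hx|]; [apply: H; right|left] => //.
Qed.

Lemma map_tupleK (T : Type) k (g g' : T -> T) (xs : k.-tuple T) :
  cancel g' g -> map_tuple g (map_tuple g' xs) = xs.
Proof. by move=> c; apply: val_inj => /=; rewrite -map_comp (eq_map c) map_id. Qed.

Lemma map_tuple_comp (T : Type) k (g g' : T -> T) (xs : k.-tuple T) :
  map_tuple (g \o g') xs = map_tuple g (map_tuple g' xs).
Proof. by apply: val_inj => /=; rewrite map_comp. Qed.

Section PositiveLowerBound.
Variable R : realType.

Lemma seq_pos_lb (T : Type) (s : seq T) (E : T -> R) :
  (forall x, List.In x s -> 0 < E x) ->
  exists2 e, 0 < e & forall x, List.In x s -> e <= E x.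
Proof.
elim: s => [|a s IH] H; first by exists 1.
have [e e0 He] := IH (fun x Hx => H x (or_intror Hx)).
have Ea : 0 < E a by apply: H; left.
exists (Num.min e (E a)); first by rewrite lt_min e0 Ea.
by move=> x [<-|Hx]; rewrite ge_min ?lexx ?orbT ?He.
Qed.

Lemma fin_pos_lb (I : finType) (E : I -> R) :
  (forall i, 0 < E i) -> exists2 e, 0 < e & forall i, e <= E i.
Proof.
move=> H; have [e e0 He] := @seq_pos_lb _ (enum I) E (fun x _ => H x).
by exists e => // i; apply/He/In_enum.
Qed.

End PositiveLowerBound.

Section MetricStructure.
Variables (R : realType) (M : mstruct R).
Local Notation d := (@mdist R M).
Hypothesis Hm : is_metric M.
Hypothesis Hb : bounded_metric M.

Lemma mdist_ge0 x y : 0 <= d x y. Proof. by case: Hm. Qed.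
Lemma mdist_sym x y : d x y = d y x. Proof. by case: Hm => _ [_ []]. Qed.
Lemma mdist_triangle x y z : d x z <= d x y + d y z. Proof. by case: Hm => _ [_ [_]]. Qed.
Lemma mdist_eq0 x y : d x y = 0 <-> x = y. Proof. by case: Hm => _ []. Qed.
Lemma mdist_xx x : d x x = 0. Proof. exact/mdist_eq0. Qed.

Lemma le_udist (g h : mcar M -> mcar M) x : d (g x) (h x) <= udist g h.
Proof.
have [B HB] := Hb.
apply: sup_upper_bound; last by exists x.
split; first by exists (d (g x) (h x)), x.
by exists B => _ [y _ <-].
Qed.

(* The hypothesis [0 <= c] covers the empty space, where [udist g h = sup set0 = 0]. *)
Lemma udist_le (g h : mcar M -> mcar M) c :
  0 <= c -> (forall x, d (g x) (h x) <= c) -> udist g h <= c.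
Proof.
move=> c0 H; have [[x _]|ne] := pselect (exists x : mcar M, True).
  by apply: ge_sup; [exists (d (g x) (h x)), x | move=> _ [y _ <-]].
rewrite /udist; suff -> : range (fun x => d (g x) (h x)) = set0 by rewrite sup0.
by apply/seteqP; split => // z [y _ _]; case: ne; exists y.
Qed.

Lemma udist_refl_lt (g : mcar M -> mcar M) e : 0 < e -> udist g g < e.
Proof. by move=> e0; apply: le_lt_trans e0; apply: udist_le => // x; rewrite mdist_xx. Qed.

Lemma udist_isometry_comp (k p q : mcar M -> mcar M) :
  (forall x y, d (k x) (k y) = d x y) -> udist (k \o p) (k \o q) = udist p q.
Proof.
by move=> Hk; rewrite /udist; do 2 f_equal; apply: funext => x /=; rewrite Hk.
Qed.

Lemma isometry_dist_shift (p q : mcar M -> mcar M) z y :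
  (forall x x', d (p x) (p x') = d x x') -> (forall x x', d (q x) (q x') = d x x') ->
  d (p z) (q z) <= d (p y) (q y) + 2 * d z y.
Proof.
move=> dp dq.
have := mdist_triangle (p z) (p y) (q z); have := mdist_triangle (p y) (q y) (q z).
by rewrite dp dq (mdist_sym y z); lra.
Qed.

Lemma isometry_eq_on_dense (D : set (mcar M)) (p q : mcar M -> mcar M) :
  (forall x e, 0 < e -> exists2 y, D y & d x y < e) ->
  (forall x y, d (p x) (p y) = d x y) -> (forall x y, d (q x) (q y) = d x y) ->
  (forall y, D y -> p y = q y) -> p = q.
Proof.
move=> HD dp dq E; apply: funext => z; apply/mdist_eq0/eqP.
rewrite eq_le mdist_ge0 andbT; apply/ler_addgt0Pr => eta eta0.
have [y Dy Hy] := HD z (eta / 2) ltac:(lra).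
have := isometry_dist_shift z y dp dq.
by rewrite (E y Dy) mdist_xx; lra.
Qed.

Lemma autM_isometry (g : mcar M -> mcar M) : autM g -> forall x y, d (g x) (g y) = d x y.
Proof. by case. Qed.

Lemma autM_comp (g h : mcar M -> mcar M) : autM g -> autM h -> autM (g \o h).
Proof.
move=> [bg dg pg fg] [bh dh ph fh]; split.
- exact: bij_comp.
- by move=> x y /=; rewrite dg dh.
- by move=> i xs; rewrite map_tuple_comp pg ph.
- by move=> j xs /=; rewrite fh fg map_tuple_comp.
Qed.

Lemma autM_inv (g : mcar M -> mcar M) :
  autM g -> exists g', [/\ autM g', cancel g g' & cancel g' g].
Proof.
move=> [[g' c1 c2] dg pg fg]; exists g'; split => //; split.
- by exists g.
- by move=> x y; rewrite -dg !c2.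
- by move=> i xs; rewrite -pg map_tupleK.
- by move=> j xs; apply: (can_inj c1); rewrite c2 fg map_tupleK.
Qed.

Lemma udist_transport (h hs hsinv gt : mcar M -> mcar M) :
  autM gt -> autM hsinv -> cancel hs hsinv -> udist (gt \o hsinv \o h) gt = udist h hs.
Proof.
move=> Xgt Xi c1; rewrite -(udist_isometry_comp h hs (autM_isometry (autM_comp Xgt Xi))).
by congr udist; apply: funext => x /=; rewrite c1.
Qed.

Lemma dist_transport_lt (h hs hsinv gt : mcar M -> mcar M) x y del :
  autM hs -> autM gt -> cancel hsinv hs -> hs y = gt y -> d (hsinv (h x)) y < del / 2 ->
  d (h x) ((gt \o hsinv \o h) x) < del.
Proof.
move=> Xhs Xgt c2 Ey /=; set z := hsinv (h x) => Hz.
have -> : h x = hs z by rewrite /z c2.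
have := isometry_dist_shift z y (autM_isometry Xhs) (autM_isometry Xgt).
by rewrite Ey mdist_xx; lra.
Qed.

End MetricStructure.

Section Category.
Variables (T : Type) (X : set T) (op : set T -> Prop).

Lemma nowhere_dense_set0 : nowhere_dense op set0.
Proof. by move=> U oU neU; exists U; split => //; rewrite setI0. Qed.

Lemma comeagreS (A A' : set T) : A `<=` A' -> comeagre X op A -> comeagre X op A'.
Proof.
move=> AA' [D [HD cov]]; exists D; split => // x [Xx nA']; apply: cov.
by split => // /AA'.
Qed.

End Category.

Section TauTopology.
Variables (R : realType) (M : mstruct R).
Local Notation d := (@mdist R M).
Hypothesis Hm : is_metric M.

Lemma tau_openI n (U V : set ('I_n -> mcar M -> mcar M)) :
  tau_open U -> tau_open V -> tau_open (U `&` V).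
Proof.
move=> [sU oU] [sV oV]; split=> [g [/sU]//|gs [/oU [F1 [e1 [e10 H1]]] /oV [F2 [e2 [e20 H2]]]]].
exists (F1 ++ F2), (Num.min e1 e2); split=> [|hs Xhs Hhs]; first by rewrite lt_min e10 e20.
split; [apply: H1 | apply: H2] => // i x Hx;
  (apply: lt_le_trans (Hhs i x _) _; [apply: List.in_or_app | rewrite ge_min lexx ?orbT //]);
  by [left | right].
Qed.

Lemma tau_open_ball n (gs : 'I_n -> mcar M -> mcar M) (F : seq (mcar M)) e :
  tau_open [set hs | AutMn hs /\ forall i x, List.In x F -> d (gs i x) (hs i x) < e].
Proof.
split=> [hs []//|hs [Xhs Hhs]].
pose P := List.flat_map (fun i => map (pair i) F) (enum 'I_n).
have inP i x : List.In x F -> List.In (i, x) P.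
  by move=> Hx; apply/List.in_flat_map; exists i; split; [apply: In_enum | apply: List.in_map].
have [e' e'0 He'] : exists2 e', 0 < e' &
    forall p, List.In p P -> e' <= e - d (gs p.1 p.2) (hs p.1 p.2).
  apply: seq_pos_lb => _ /List.in_flat_map [i [_ /List.in_map_iff [x [<- Hx]]]] /=.
  by have := Hhs i x Hx; lra.
exists F, e'; split => // hs' Xhs' Hhs'; split => // i x Hx.
have := He' _ (inP i x Hx); have := Hhs' i x Hx.
have := mdist_triangle Hm (gs i x) (hs i x) (hs' i x); lra.
Qed.

End TauTopology.

Section NTopology.
Variable N : cstruct.
Local Notation XN n := (@AutNn N n).

Lemma N_openI n (U V : set ('I_n -> ncar N -> ncar N)) :
  N_open U -> N_open V -> N_open (U `&` V).
Proof.
move=> [sU oU] [sV oV]; split=> [g [/sU]//|ss [/oU [F1 H1] /oV [F2 H2]]].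
exists (F1 ++ F2) => ts Xts Hts.
by split; [apply: H1 | apply: H2] => // i x Hx; apply: Hts; apply: List.in_or_app; [left|right].
Qed.

Lemma AutNn_open n : N_open (XN n).
Proof. by split => // ss _; exists [::]. Qed.

Lemma N_open_agree n (P : seq (ncar N)) (ss : 'I_n -> ncar N -> ncar N) :
  N_open [set ts | XN n ts /\ forall i y, List.In y P -> ts i y = ss i y].
Proof.
split=> [ts []//|ts [Xts Hts]]; exists P => ts' Xts' E; split => // i y Hy.
by rewrite E // Hts.
Qed.

(* [W k] is the union of the open sets missing the [k]-th nowhere dense set. *)
Lemma comeagre_AutNn_bigcap n (A : set ('I_n -> ncar N -> ncar N)) :
  comeagre (XN n) (@N_open N n) A ->
  exists W : nat -> set ('I_n -> ncar N -> ncar N),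
    [/\ forall k, N_open (W k),
        forall k U, N_open U -> U !=set0 -> (U `&` W k) !=set0 &
        [set ts | XN n ts /\ forall k, W k ts] `<=` A].
Proof.
move=> [D [HD cov]].
exists (fun k => [set ts | XN n ts /\ exists V, [/\ N_open V, V ts & V `&` D k = set0]]).
split.
- move=> k; split=> [ts []//|ts [Xts [V [oV Vts VD]]]].
  have [F HF] := oV.2 ts Vts.
  by exists F => ts' Xts' E; split => //; exists V; split => //; exact: HF.
- move=> k U oU neU; have [V [oV [v Vv] VU VD]] := HD k U oU neU.
  by exists v; split; [exact: VU | split; [exact: oV.1 | exists V]].
- move=> ts [Xts Wts]; apply: contrapT => nA.
  have [k _ Dk] := cov ts (conj Xts nA).
  have [_ [V [_ Vts VD]]] := Wts k.
  by have : (V `&` D k) ts by []; rewrite VD.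
Qed.

End NTopology.

(* A requirement [(i, f x, f y)] asks [t i x = y]; coding points through the injection
   [f] lets finite lists of requirements range over a countable type. *)
Section Requirements.
Variables (N : cstruct) (f : ncar N -> nat).
Hypothesis f_inj : injective f.
Local Notation XN n := (@AutNn N n).

Definition meets n (t : 'I_n -> ncar N -> ncar N) (L : seq (nat * nat * nat)) :=
  forall (i : 'I_n) x y, List.In (nat_of_ord i, f x, f y) L -> t i x = y.

Definition basic n L := [set t : 'I_n -> ncar N -> ncar N | XN n t /\ meets t L].
Arguments basic : clear implicits.

Definition covers n (k : nat) (L : seq (nat * nat * nat)) :=
  forall x, f x = k -> forall i : 'I_n,
    (exists y, List.In (nat_of_ord i, f x, f y) L) /\
    (exists u, List.In (nat_of_ord i, f u, f x) L).

Definition graph n (s : 'I_n -> ncar N -> ncar N) (P : 'I_n -> seq (ncar N)) :=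
  List.flat_map (fun i => map (fun x => (nat_of_ord i, f x, f (s i x))) (P i)) (enum 'I_n).

Definition decode (a : nat) : option (ncar N) :=
  if pselect (exists x, f x = a) is left ex then Some (projT1 (cid ex)) else None.

Lemma decode_f x : decode (f x) = Some x.
Proof.
rewrite /decode; case: pselect => [ex|]; last by case; exists x.
by congr Some; apply: f_inj; case: (cid ex).
Qed.

Lemma meets_cat n (t : 'I_n -> ncar N -> ncar N) L L' :
  meets t (L ++ L') <-> meets t L /\ meets t L'.
Proof.
split=> [H|[H H'] i x y Hin].
  by split=> i x y Hin; apply: H; apply: List.in_or_app; [left|right].
by case: (List.in_app_or _ _ _ Hin); [apply: H | apply: H'].
Qed.

Lemma graph_In n (s : 'I_n -> ncar N -> ncar N) P i x :
  List.In x (P i) -> List.In (nat_of_ord i, f x, f (s i x)) (graph s P).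
Proof.
by move=> Hx; apply/List.in_flat_map; exists i; split; [apply: In_enum | apply: List.in_map].
Qed.

Lemma meets_graph n (s : 'I_n -> ncar N -> ncar N) P : meets s (graph s P).
Proof.
move=> i x y /List.in_flat_map [j [_ /List.in_map_iff [x' [E _]]]].
by case: E => /val_inj <- /f_inj <- /f_inj <-.
Qed.

Lemma meets_graph_agree n (s t : 'I_n -> ncar N -> ncar N) P i x :
  meets t (graph s P) -> List.In x (P i) -> t i x = s i x.
Proof. by move=> Ht /(graph_In s) /Ht. Qed.

Lemma covers_agree n k L (t t' : 'I_n -> ncar N -> ncar N) x :
  covers n k L -> f x = k -> meets t L -> meets t' L -> forall i, t i x = t' i x.
Proof.
by move=> cL fx Ht Ht' i; have [[y Hy] _] := cL x fx i; rewrite (Ht _ _ _ Hy) (Ht' _ _ _ Hy).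
Qed.

Lemma basic_open n L : N_open (basic n L).
Proof.
split=> [t []//|t [Xt Ht]].
exists (List.flat_map (fun p : nat * nat * nat =>
  if decode p.1.2 is Some x then [:: x] else [::]) L).
move=> t' Xt' E; split => // i x y Hin; rewrite E; first exact: Ht.
by apply/List.in_flat_map; exists (nat_of_ord i, f x, f y); rewrite /= decode_f; split=> //; left.
Qed.

Lemma exists_upper_index (l : seq (ncar N)) :
  exists J, forall x, List.In x l -> ((f x).+1 <= J)%N.
Proof.
elim: l => [|a l [J HJ]]; first by exists 0%N.
exists (maxn (f a).+1 J) => x [<-|/HJ]; first by rewrite leq_maxl.
by move/leq_trans; apply; rewrite leq_maxr.
Qed.

Section Limit.
Variables (n : nat) (L : nat -> seq (nat * nat * nat)).
Hypothesis L_nested : forall k, basic n (L k.+1) `<=` basic n (L k).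
Hypothesis L_covers : forall k, covers n k (L k.+1).
Hypothesis L_nonempty : forall k, basic n (L k) !=set0.

Lemma basic_nested j j' : (j <= j')%N -> basic n (L j') `<=` basic n (L j).
Proof.
move=> /subnKC <-; elim: (j' - j)%N => [|m IH]; first by rewrite addn0.
by rewrite addnS => t /L_nested /IH.
Qed.

(* The limit is read off at stage [(f x).+1], where the requirements at [x] are settled. *)
Let sk k := projT1 (cid (L_nonempty k)).
Let sk_basic k : basic n (L k) (sk k). Proof. exact: projT2 (cid (L_nonempty k)). Qed.
Let s i x := sk (f x).+1 i x.

Let basic_agree j t i x : ((f x).+1 <= j)%N -> basic n (L j) t -> t i x = s i x.
Proof.
move=> le /(basic_nested le) [_ Ht].
exact: covers_agree (@L_covers (f x)) erefl Ht (sk_basic _).2 i.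
Qed.

Let agree_on_seq (l : seq (ncar N)) :
  exists J, forall t i x, basic n (L J) t -> List.In x l -> t i x = s i x.
Proof.
have [J HJ] := exists_upper_index l.
by exists J => t i x Bt Hx; apply: basic_agree Bt; apply: HJ.
Qed.

Let s_meets k : meets s (L k).
Proof.
move=> i x y Hin; pose J := maxn k (f x).+1.
rewrite -(basic_agree i (leq_maxr k _) (sk_basic J)).
by apply: (basic_nested (leq_maxl _ _) (sk_basic J)).2.
Qed.

Let s_autN : XN n s.
Proof.
move=> i.
have surj x : exists u, s i u = x.
  by have [_ [u Hu]] := @L_covers (f x) x erefl i; exists u; exact: s_meets Hu.
have inj : injective (s i).
  move=> x1 x2 E; have [J' HJ'] := agree_on_seq [:: x1; x2].
  have [[g0 c1 _] _ _] := (sk_basic J').1 i; apply: (can_inj c1).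
  by rewrite !HJ' ?(sk_basic J') //=; [right; left | left].
split.
- have [sv Hsv] := choice surj; exists sv => x; last exact: Hsv.
  by apply: inj; rewrite Hsv.
- move=> j xs; have [J' HJ'] := agree_on_seq xs.
  have -> : map_tuple (s i) xs = map_tuple (sk J' i) xs.
    by apply: val_inj; apply: map_ext_In => x Hx; rewrite HJ' ?(sk_basic J').
  by case: ((sk_basic J').1 i).
- move=> j xs; have [J' HJ'] := agree_on_seq (nfun xs :: xs).
  have -> : map_tuple (s i) xs = map_tuple (sk J' i) xs.
    by apply: val_inj; apply: map_ext_In => x Hx; rewrite HJ' ?(sk_basic J') //; right.
  rewrite -(HJ' _ _ _ (sk_basic J')); last by left.
  by case: ((sk_basic J').1 i).
Qed.

Lemma basic_limit : exists s, forall k, basic n (L k) s.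
Proof. by exists s => k; split; [exact: s_autN | exact: s_meets]. Qed.

End Limit.

End Requirements.

Arguments basic {N} f n L.

Section Approximation.
Variables (R : realType) (M : mstruct R) (N : cstruct) (iota : ncar N -> mcar M).
Local Notation d := (@mdist R M).
Hypothesis Hm : is_metric M.
Hypothesis Hb : bounded_metric M.
Hypothesis iota_dense : forall x e, 0 < e -> exists y, d x (iota y) < e.
Hypothesis autN_ext : forall s, autN s -> exists g, autM g /\ extends iota g s.
Hypothesis extn_dense :
  forall U, tau_open U -> U !=set0 -> (U `&` extn iota (@AutNn N 1)) !=set0.
Hypothesis good : forall (U : set ('I_1 -> ncar N -> ncar N)) e,
  N_open U -> 0 < e -> tau_open (eps_nbhd (extn iota U) e).

Local Notation XM n := (@AutMn R M n).
Local Notation XN n := (@AutNn N n).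
Local Notation Ext V := (@extn R M N iota _ V).
Local Notation nbd V e := (eps_nbhd (Ext V) e).

Lemma extn_exists n (ts : 'I_n -> ncar N -> ncar N) :
  XN n ts -> exists gs, XM n gs /\ forall i, extends iota (gs i) (ts i).
Proof.
move=> Xts; have [gs Hgs] := choice (fun i => autN_ext (Xts i)).
by exists gs; split => i; case: (Hgs i).
Qed.

Lemma eps_nbhd_extnS n (V V' : set ('I_n -> ncar N -> ncar N)) e :
  V `<=` V' -> nbd V e `<=` nbd V' e.
Proof.
move=> VV' g [Xg [hs [Xhs [ss /VV' Vss Ess]] Hl]].
by split => //; exists hs => //; split => //; exists ss.
Qed.

Lemma eps_nbhd_extn_coord n (V : set ('I_n -> ncar N -> ncar N)) F ss e gs :
  (forall ts, XN n ts -> (forall i x, List.In x F -> ts i x = ss i x) -> V ts) ->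
  (forall i, nbd [set t | XN 1 t /\ forall j y, List.In y F -> t j y = ss i y] e (fun=> gs i)) ->
  nbd V e gs.
Proof.
move=> HF Hgs; split=> [i|]; first by case: (Hgs i) => /(_ ord0).
have coord i : exists p : (mcar M -> mcar M) * (ncar N -> ncar N),
    [/\ autM p.1, autN p.2 /\ (forall y, List.In y F -> p.2 y = ss i y),
        extends iota p.1 p.2 & udist (gs i) p.1 < e].
  have [_ [h1 [Xh1 [t1 [Xt1 Ht1] Et1]] Hh1]] := Hgs i.
  exists (h1 ord0, t1 ord0); split; [exact: Xh1 | split | exact: Et1 | exact: Hh1].
    exact: Xt1.
  exact: Ht1 ord0.
have [p Hp] := choice coord.
exists (fun i => (p i).1) => [|i]; last by case: (Hp i).
split=> [i|]; first by case: (Hp i).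
exists (fun i => (p i).2) => [|i]; last by case: (Hp i).
by apply: HF => [i|i x Hx]; case: (Hp i) => _ [X2 H2] _ _; [exact: X2 | exact: H2].
Qed.

(* Goodness, assumed for single automorphisms, holds coordinatewise for tuples. *)
Lemma tau_open_eps_nbhd_extn n (V : set ('I_n -> ncar N -> ncar N)) e :
  N_open V -> 0 < e -> tau_open (nbd V e).
Proof.
move=> [sV oV] e0; split=> [gs []//|gs [Xgs [hs [Xhs [ss Vss Ess]] Hl]]].
have [F HF] := oV _ Vss.
pose U1 i := [set t : 'I_1 -> ncar N -> ncar N |
  XN 1 t /\ forall j y, List.In y F -> t j y = ss i y].
have nbd1 i : exists FE : seq (mcar M) * R, 0 < FE.2 /\ forall gs1, XM 1 gs1 ->
    (forall j x, List.In x FE.1 -> d (gs i x) (gs1 j x) < FE.2) -> nbd (U1 i) e gs1.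
  have [_ o] := good (N_open_agree F (fun=> ss i)) e0.
  have [|F' [e' [e'0 H']]] := o (fun=> gs i); last by exists (F', e').
  split=> [j|]; first exact: Xgs.
  exists (fun=> hs i) => //; split=> [j|]; first exact: Xhs.
  by exists (fun=> ss i) => //; split=> // j; exact: sV _ Vss i.
have [FE HFE] := choice nbd1.
have [e' e'0 He'] := fin_pos_lb (fun i => (HFE i).1).
exists (List.flat_map (fun i => (FE i).1) (enum 'I_n)), e'; split => // gs' Xgs' Hgs'.
apply: eps_nbhd_extn_coord HF _ => i; apply: (HFE i).2 => [j|j x Hx]; first exact: Xgs'.
apply: lt_le_trans (He' i); apply: Hgs'.
by apply/List.in_flat_map; exists i; split => //; exact: In_enum.
Qed.

Lemma extn_AutNn_dense n (U : set ('I_n -> mcar M -> mcar M)) :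
  tau_open U -> U !=set0 -> (U `&` Ext (XN n)) !=set0.
Proof.
move=> [sU oU] [gs Ugs]; have Xgs := sU _ Ugs.
have [F [e [e0 HU]]] := oU _ Ugs.
have coord i : exists p : ('I_1 -> mcar M -> mcar M) * ('I_1 -> ncar N -> ncar N),
    [/\ XM 1 p.1, (forall x, List.In x F -> d (gs i x) (p.1 ord0 x) < e),
        XN 1 p.2 & forall j, extends iota (p.1 j) (p.2 j)].
  have [|h [[Xh Hh] [_ [t Xt Et]]]] := extn_dense (tau_open_ball Hm (fun=> gs i) F e).
    by exists (fun=> gs i); split=> [j|j x _]; [exact: Xgs | rewrite (mdist_xx Hm)].
  by exists (h, t); split=> // x; exact: Hh.
have [p Hp] := choice coord.
have Xp : XM n (fun i => (p i).1 ord0) by move=> i; case: (Hp i) => X1 _ _ _; exact: X1.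
exists (fun i => (p i).1 ord0); split; first by apply: HU => // i x Hx; case: (Hp i) => _ ->.
split => //; exists (fun i => (p i).2 ord0) => i.
  by case: (Hp i) => _ _ X1 _; exact: X1.
by case: (Hp i) => _ _ _ E1; exact: E1.
Qed.

Lemma nowhere_dense_compl_eps_nbhd n e :
  0 < e -> nowhere_dense (@tau_open R M n) (XM n `\` nbd (XN n) e).
Proof.
move=> e0 U oU neU; have [h [Uh [Xh [ss Xss Ess]]]] := extn_AutNn_dense oU neU.
exists (U `&` nbd (XN n) e); split.
- exact: tau_openI oU (tau_open_eps_nbhd_extn (AutNn_open N n) e0).
- exists h; split=> //; split=> //; exists h => [|i]; first by split=> //; exists ss.
  exact: udist_refl_lt.
- exact: subIsetl.
- exact: subsetI_eq0 (@subIsetr _ _ _) (@subset_refl _ _) (setDIK _ _).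
Qed.

(* Pull [h] back through [hs], where [hs] extends an element of [V], and push it forward
   through an extension of an element of [V `&` W] agreeing with it on enough points. *)
Lemma nowhere_dense_eps_nbhd_diff n (V W : set ('I_n -> ncar N -> ncar N)) e :
  N_open V -> N_open W -> (forall U, N_open U -> U !=set0 -> (U `&` W) !=set0) -> 0 < e ->
  nowhere_dense (@tau_open R M n) (nbd V e `\` nbd (V `&` W) e).
Proof.
move=> oV oW dW e0 U oU neU.
have [[h [Uh [Xh [hs [Xhs [ss Vss Ess]] Hl]]]]|no] :=
  pselect (exists h, U h /\ nbd V e h); last first.
  by exists U; split=> //; apply/disjoints_subset => g Ug [Vg _]; apply: no; exists g.
have [F [del [del0 HU]]] := oU.2 h Uh.
have [hsinv Hinv] := choice (fun i => autM_inv (Xhs i)).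
have [yf Hyf] := choice (fun p : 'I_n * mcar M =>
  @iota_dense (hsinv p.1 (h p.1 p.2)) (del / 2) ltac:(lra)).
pose P := List.flat_map (fun i => map (fun x => yf (i, x)) F) (enum 'I_n).
have inP i x : List.In x F -> List.In (yf (i, x)) P.
  by move=> Hx; apply/List.in_flat_map; exists i; split; [apply: In_enum | apply: List.in_map].
have [|t [[[Xt Ct] Vt] Wt]] := dW _ (N_openI (N_open_agree P ss) oV).
  by exists ss; split => //; split => //; exact: oV.1 _ Vss.
have [gt [Xgt Egt]] := extn_exists Xt.
pose h' i := gt i \o hsinv i \o h i.
have Xh' : XM n h'.
  by move=> i; case: (Hinv i) => Xi _ _; exact: autM_comp (autM_comp (Xgt i) Xi) (Xh i).
have Uh' : U h'.
  apply: HU => // i x Hx; case: (Hinv i) => _ _ c2.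
  apply: (dist_transport_lt Hm (Xhs i) (Xgt i) c2 _ (Hyf (i, x))).
  by rewrite Ess Egt Ct //; exact: inP.
have Nh' : nbd (V `&` W) e h'.
  split => //; exists gt; first by split => //; exists t.
  by move=> i; case: (Hinv i) => Xi c1 _; rewrite (udist_transport _ (Xgt i) Xi c1); exact: Hl.
exists (U `&` nbd (V `&` W) e); split.
- exact: tau_openI oU (tau_open_eps_nbhd_extn (N_openI oV oW) e0).
- by exists h'.
- exact: subIsetl.
- exact: subsetI_eq0 (@subIsetr _ _ _) (@subset_refl _ _) (setDIK _ _).
Qed.

Variables (f : ncar N -> nat) (f_inj : injective f).

(* Besides forcing the open set [W], the new requirements fix the image and the preimage
   of the point coded by [k]: this is the back-and-forth step. *)
Lemma back_and_forth_step n (W : set ('I_n -> ncar N -> ncar N)) g e k L :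
  N_open W -> nbd (basic f n L `&` W) e g ->
  exists L', [/\ nbd (basic f n L') e g, basic f n L' `<=` basic f n L `&` W &
                 covers f n k L'].
Proof.
move=> oW [Xg [hs [Xhs [s [[Xs sL] Ws] Es]] Hl]].
have [F HF] := oW.2 _ Ws.
have s_inv i : exists g1, cancel g1 (s i) by case: (Xs i) => -[g1 _ c2] _ _; exists g1.
have [sinv Hsinv] := choice s_inv.
pose P i := F ++ (if decode f k is Some x then [:: x; sinv i x] else [::]).
have sL' : meets f s (L ++ graph f s P).
  by apply/meets_cat; split; [exact: sL | exact: meets_graph].
exists (L ++ graph f s P); split.
- by split => //; exists hs => //; split => //; exists s.
- move=> t [Xt /meets_cat [tL tG]]; split=> //.
  apply: HF => // i x Hx; apply: meets_graph_agree tG _.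
  by apply: List.in_or_app; left.
- move=> x fx i; subst k.
  have inP u : List.In u [:: x; sinv i x] -> List.In u (P i).
    by move=> Hu; apply: List.in_or_app; right; rewrite (decode_f f_inj).
  split; [exists (s i x) | exists (sinv i x)]; apply: List.in_or_app; right.
    by apply: graph_In; apply: inP; left.
  by rewrite -[in f x](Hsinv i x); apply: graph_In; apply: inP; right; left.
Qed.

Lemma back_and_forth n (W : nat -> set ('I_n -> ncar N -> ncar N)) g e :
  (forall k, N_open (W k)) -> 0 < e -> nbd (XN n) e g ->
  (forall L k, nbd (basic f n L) e g -> nbd (basic f n L `&` W k) e g) ->
  exists s hs, [/\ XN n s, (forall k, W k s), XM n hs,
    (forall i, extends iota (hs i) (s i)) & forall i, udist (g i) (hs i) <= e].
Proof.
move=> oW e0 gXN gW.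
pose Next (p : nat * seq (nat * nat * nat)) L' := nbd (basic f n p.2) e g ->
  [/\ nbd (basic f n L') e g, basic f n L' `<=` basic f n p.2 `&` W p.1 & covers f n p.1 L'].
have next_ex p : exists L', Next p L'.
  case: p => k L; have [gL|ngL] := pselect (nbd (basic f n L) e g); last by exists L => /ngL.
  by have [L' HL'] := back_and_forth_step k (oW k) (gW L k gL); exists L'.
have [next Hnext] := choice next_ex.
pose Ls := nat_rect (fun _ => seq (nat * nat * nat)) [::] (fun k L => next (k, L)).
have Ls_nbd k : nbd (basic f n (Ls k)) e g.
  elim: k => [|k IH]; last by case: (Hnext (k, Ls k) IH).
  by apply: eps_nbhd_extnS gXN => t Xt; split.
have Ls_next k := Hnext (k, Ls k) (Ls_nbd k).
have Ls_sub k : basic f n (Ls k.+1) `<=` basic f n (Ls k) `&` W k by case: (Ls_next k).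
have Ls_covers k : covers f n k (Ls k.+1) by case: (Ls_next k).
have Ls_nonempty k : basic f n (Ls k) !=set0.
  by have [_ [_ [_ [ss Bss _]] _]] := Ls_nbd k; exists ss.
have [s Hs] := basic_limit (fun k t Bt => (Ls_sub k t Bt).1) Ls_covers Ls_nonempty.
have Xs := (Hs 0%N).1; have [hs [Xhs Ehs]] := extn_exists Xs.
exists s, hs; split=> // [k|i].
  by case: (Ls_sub k s (Hs k.+1)).
apply: udist_le (ltW e0) _ => x; apply/ler_addgt0Pr => eta eta0.
have [y Hy] := @iota_dense x (eta / 2) ltac:(lra).
have [_ [hs' [Xhs' [s' [Xs' s'L] Es']] Hl']] := Ls_nbd (f y).+1.
have s'_s : s' i y = s i y := covers_agree (Ls_covers (f y)) erefl s'L (Hs _).2 i.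
have := le_udist Hb (g i) (hs' i) x; have := Hl' i.
have := mdist_triangle Hm (g i x) (hs' i x) (hs i x).
have := isometry_dist_shift Hm x (iota y) (autM_isometry (Xhs' i)) (autM_isometry (Xhs i)).
by rewrite Es' Ehs s'_s (mdist_xx Hm); lra.
Qed.

Lemma dclosure_extnS n (A A' : set ('I_n -> ncar N -> ncar N)) :
  A `<=` A' -> dclosure (Ext A) `<=` dclosure (Ext A').
Proof.
move=> AA' g [Xg Hg]; split => // e /Hg [hs [Xhs [ss /AA' A'ss Ess]] Hl].
by exists hs => //; split => //; exists ss.
Qed.

(* The nowhere dense sets are indexed by [inl p] (for the radius [1/(p+1)]) and by
   [inr (k, p, L)] (for the dense open set [W k] inside the basic set [L]). *)
Lemma comeagre_dclosure_extn_bigcap n (W : nat -> set ('I_n -> ncar N -> ncar N)) :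
  (forall k, N_open (W k)) ->
  (forall k U, N_open U -> U !=set0 -> (U `&` W k) !=set0) ->
  comeagre (XM n) (@tau_open R M n) (dclosure (Ext [set t | XN n t /\ forall k, W k t])).
Proof.
move=> oW dW; pose eps (p : nat) : R := p.+1%:R^-1.
have eps0 p : 0 < eps p by rewrite invr_gt0 ltr0n.
pose I := (nat + nat * nat * seq (nat * nat * nat))%type.
pose D j := match @unpickle I j with
  | Some (inl p) => XM n `\` nbd (XN n) (eps p)
  | Some (inr q) => nbd (basic f n q.2) (eps q.1.2) `\` nbd (basic f n q.2 `&` W q.1.1) (eps q.1.2)
  | None => set0 end.
exists D; split=> [j|g [Xg notcl]].
  rewrite /D; case: unpickle => [[p|[[k p] L]]|].
  - exact: nowhere_dense_compl_eps_nbhd.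
  - exact: nowhere_dense_eps_nbhd_diff (basic_open f_inj n L) (oW k) (dW k) (eps0 p).
  - exact: nowhere_dense_set0.
apply: contrapT => notD; apply: notcl; split => // e e0.
have {}notD j : ~ D j g by move=> Dg; apply: notD; exists j.
have [p Hp] := ltr_add_invr e0; rewrite add0r in Hp.
have gXN : nbd (XN n) (eps p) g.
  by apply: contrapT => ng; apply: (notD (pickle (inl p : I))); rewrite /D pickleK.
have gW L k : nbd (basic f n L) (eps p) g -> nbd (basic f n L `&` W k) (eps p) g.
  move=> gL; apply: contrapT => ng.
  by apply: (notD (pickle (inr (k, p, L) : I))); rewrite /D pickleK.
have [s [hs [Xs Ws Xhs Ehs Hhs]]] := back_and_forth oW (eps0 p) gXN gW.
exists hs; first by split => //; exists s.
by move=> i; apply: le_lt_trans (Hhs i) Hp.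
Qed.

Lemma comeagre_dclosure_extn n (A : set ('I_n -> ncar N -> ncar N)) :
  comeagre (XN n) (@N_open N n) A -> comeagre (XM n) (@tau_open R M n) (dclosure (Ext A)).
Proof.
move=> /comeagre_AutNn_bigcap [W [oW dW WA]].
exact: comeagreS (dclosure_extnS WA) (comeagre_dclosure_extn_bigcap oW dW).
Qed.

(* Conjugacy is detected on the dense image of [iota], where it is the conjugacy in [N]. *)
Lemma extn_conjclassN n (ss : 'I_n -> ncar N -> ncar N) gs :
  (forall i, extends iota (gs i) (ss i)) -> XM n gs ->
  Ext (conjclassN ss) `<=` conjclassM gs.
Proof.
move=> Egs Xgs hs [Xhs [ts [Xts [k Xk Hk]] Ets]]; split => //.
have [gk [Xgk Egk]] := autN_ext Xk.
exists gk => // i; apply: (isometry_eq_on_dense Hm (D := range iota)).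
- by move=> x e e0; have [y Hy] := iota_dense x e0; exists (iota y) => //; exists y.
- by move=> x y /=; rewrite !(autM_isometry (Xhs i)) (autM_isometry Xgk).
- by move=> x y /=; rewrite (autM_isometry Xgk) (autM_isometry (Xgs i)).
- move=> _ [x _ <-] /=; rewrite Egk Ets Egs Egk.
  by have /= -> := congr1 (fun F => F x) (Hk i).
Qed.

Lemma ample_generics_extn : ample_generics_N N -> ample_generics_topometric M.
Proof.
move=> HN n e e0; have [ss Xss Hc] := HN n.
have [gs [Xgs Egs]] := extn_exists Xss.
exists gs => //; apply: comeagreS (comeagre_dclosure_extn Hc).
move=> g [Xg /(_ e e0) [hs Hhs Hl]]; split => //; exists hs => //.
exact: extn_conjclassN Egs Xgs _ Hhs.
Qed.

End Approximation.

Theorem theorem5p6 (R : realType) (M : mstruct R) (N : cstruct)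
    (iota : ncar N -> mcar M) :
  polish_metric_structure M ->
  good_approximating iota ->
  (forall (n : nat) (A : set ('I_n -> ncar N -> ncar N)),
     A `<=` @AutNn N n ->
     comeagre (@AutNn N n) (@N_open N n) A ->
     comeagre (@AutMn R M n) (@tau_open R M n) (dclosure (extn iota A)))
  /\ (ample_generics_N N -> ample_generics_topometric M).
Proof.
move=> [[Hm _ Hb _ _] _] [[_ /countable_injP [f f_inj] Hden Hext Hdense] Hgood].
have {}f_inj : injective f by move=> x y; apply: f_inj; rewrite in_setT.
split=> [n A _ cA|].
- exact: (comeagre_dclosure_extn Hm Hb Hden Hext Hdense Hgood f_inj cA).
- exact: (ample_generics_extn Hm Hb Hden Hext Hdense Hgood f_inj).
Qed.
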